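(* There exists a set $\mathcal X$ of four points in $\mathbb R^3$ (with Euclidean distance) having a perfect $2$-clustering $\mathcal C=\{C_1,C_2\}$ that is a global minimizer of the $2$-means cost, i.e. $\sum_{i=1}^2\sum_{x\in C_i}\|x-\mu(C_i)\|^2\le \sum_{i=1}^2\sum_{x\in C_i'}\|x-\mu(C_i')\|^2$ for every $2$-clustering $\{C_1',C_2'\}$ of $\mathcal X$ (where $\mu(C)$ is the mean of $C$), but such that for every ordering of the four points, the final centers produced by sequential $2$-means run on that ordering do not induce $\mathcal C$ on $\mathcal X$.
   Context: A clustering of $\mathcal X$ is a set of nonempty, pairwise disjoint subsets whose union is $\mathcal X$; a $k$-clustering has exactly $k$ clusters. Write $x\sim_{\mathcal C}y$ if $x,y$ are in the same cluster and $x\not\sim_{\mathcal C}y$ otherwise. $\mathcal C$ is perfect if $\|x-y\|<\|w-z\|$ whenever $x\sim_{\mathcal C}y$ and $w\not\sim_{\mathcal C}z$. A list of points $T=(t_1,\ldots,t_m)$ induces the clustering of $\mathcal X$ in which each $x$ is assigned to the index $i$ minimizing $\|x-t_i\|$ (ties broken by smallest $i$), empty clusters discarded. Sequential $k$-means on input sequence $x_1,\ldots,x_N$ in $\mathbb R^p$ ($N\ge k$): set $t_i=x_i$ and $n_i=1$ for $i=1,\ldots,k$; then for each subsequent point $x$: let $i$ be the index of the closest center $t_i$ to $x$ (ties broken by smallest index), increment $n_i$, and replace $t_i$ by $t_i+(1/n_i)(x-t_i)$. The output is the final list $(t_1,\ldots,t_k)$. *)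

From Stdlib Require Import Reals List Permutation.
Import ListNotations.
Open Scope R_scope.

Definition pt : Type := (R * R * R)%type.
Definition pzero : pt := (0, 0, 0).
Definition padd (p q : pt) : pt :=
  let '(a1, a2, a3) := p in let '(b1, b2, b3) := q in (a1 + b1, a2 + b2, a3 + b3).
Definition psub (p q : pt) : pt :=
  let '(a1, a2, a3) := p in let '(b1, b2, b3) := q in (a1 - b1, a2 - b2, a3 - b3).
Definition pscale (c : R) (p : pt) : pt :=
  let '(a1, a2, a3) := p in (c * a1, c * a2, c * a3).
Definition pnorm (p : pt) : R :=
  let '(a1, a2, a3) := p in sqrt (a1 ^ 2 + a2 ^ 2 + a3 ^ 2).
Definition dist (p q : pt) : R := pnorm (psub p q).

(* Subsets of the finite data set X (a list of distinct points) are
   represented by boolean predicates, only their restriction to X matters. *)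

Definition is_2clustering (X : list pt) (C1 C2 : pt -> bool) : Prop :=
  existsb C1 X = true /\ existsb C2 X = true /\
  (forall x, In x X -> C1 x = negb (C2 x)).

Definition same_cluster (C1 C2 : pt -> bool) (x y : pt) : bool :=
  (C1 x && C1 y) || (C2 x && C2 y).

Definition perfect2 (X : list pt) (C1 C2 : pt -> bool) : Prop :=
  forall x y w z, In x X -> In y X -> In w X -> In z X ->
    same_cluster C1 C2 x y = true -> same_cluster C1 C2 w z = false ->
    dist x y < dist w z.

Definition psum (l : list pt) : pt := fold_right padd pzero l.
Definition mean (X : list pt) (C : pt -> bool) : pt :=
  pscale (/ INR (length (filter C X))) (psum (filter C X)).
Definition cluster_cost (X : list pt) (C : pt -> bool) : R :=
  fold_right Rplus 0 (map (fun x => (dist x (mean X C)) ^ 2) (filter C X)).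
Definition cost2 (X : list pt) (C1 C2 : pt -> bool) : R :=
  cluster_cost X C1 + cluster_cost X C2.

(* Index of the closest center (ties broken by smallest index). *)
Fixpoint closest_aux (x : pt) (T : list pt) (i best : nat) (bd : R) : nat :=
  match T with
  | [] => best
  | t :: T' => if Rlt_dec (dist x t) bd
               then closest_aux x T' (S i) i (dist x t)
               else closest_aux x T' (S i) best bd
  end.
Definition closest (x : pt) (T : list pt) : nat :=
  match T with
  | [] => O
  | t :: T' => closest_aux x T' 1 O (dist x t)
  end.

Definition induced (X : list pt) (T : list pt) : list (pt -> bool) :=
  filter (fun A => existsb A X)
    (map (fun i => fun x => Nat.eqb (closest x T) i) (seq 0 (length T))).

Definition subset_eq (X : list pt) (A B : pt -> bool) : Prop :=
  forall x, In x X -> A x = B x.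
Definition family_eq (X : list pt) (F G : list (pt -> bool)) : Prop :=
  (forall A, In A F -> exists B, In B G /\ subset_eq X A B) /\
  (forall B, In B G -> exists A, In A F /\ subset_eq X A B).

(* Sequential k-means. State: list of (center, count). *)
Fixpoint upd (st : list (pt * nat)) (i : nat) (x : pt) : list (pt * nat) :=
  match st, i with
  | [], _ => []
  | (t, n) :: st', O =>
      let n' := S n in (padd t (pscale (/ INR n') (psub x t)), n') :: st'
  | p :: st', S i' => p :: upd st' i' x
  end.
Definition skm_step (st : list (pt * nat)) (x : pt) : list (pt * nat) :=
  upd st (closest x (map fst st)) x.
Definition seq_kmeans (k : nat) (xs : list pt) : list pt :=
  map fst (fold_left skm_step (skipn k xs) (map (fun x => (x, 1%nat)) (firstn k xs))).

(* The data set consists of two pairs of points at distance 4, placed on two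
   perpendicular lines lying in parallel planes 3 apart:
   a, b = (±2, 0, 0) and c, d = (0, ±2, 3).  All cross distances are √17 > 4,
   so the clustering into the two pairs is perfect, and a direct comparison of
   the seven 2-clusterings shows it has minimal 2-means cost 16.

   If the first two points
   form a pair, both centers start in one cluster; the third point is
   equidistant from them, so it joins the first center (ties go to the smaller
   index) and drags it towards the other pair, which the fourth point then
   joins as well.  Otherwise the third point joins the center of its partner,
   moving it to the midpoint of the pair, which is at distance √13 < 4 from
   each point of the other pair; so the fourth point joins it as well.  In
   every case the final centers induce a 3 + 1 split. *)

From Pilot Require Import Defs.
From Stdlib Require Import Reals List Permutation Lra Lia.
Import ListNotations.
(* [Reals] shadows [dist] by its metric-space distance. *)
Import Defs.
Open Scope R_scope.

Definition sqdist (p q : pt) : R :=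
  let '(a1, a2, a3) := psub p q in a1 ^ 2 + a2 ^ 2 + a3 ^ 2.

Lemma sqdist_ge0 (p q : pt) : 0 <= sqdist p q.
Proof. unfold sqdist; destruct (psub p q) as [[a1 a2] a3]; nra. Qed.

Lemma dist_sqrt_sqdist (p q : pt) : dist p q = sqrt (sqdist p q).
Proof. unfold dist, pnorm, sqdist; destruct (psub p q) as [[a1 a2] a3]; reflexivity. Qed.

Lemma dist_sqr (p q : pt) : dist p q ^ 2 = sqdist p q.
Proof. rewrite dist_sqrt_sqdist, pow2_sqrt; [reflexivity | apply sqdist_ge0]. Qed.

Lemma dist_lt_sqdist (p q r s : pt) : dist p q < dist r s <-> sqdist p q < sqdist r s.
Proof.
  rewrite !dist_sqrt_sqdist; split.
  - apply sqrt_lt_0_alt.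
  - intro lt_pq_rs; apply sqrt_lt_1_alt; split; [apply sqdist_ge0 | exact lt_pq_rs].
Qed.

Lemma closest_pair (x t1 t2 : pt) :
  closest x [t1; t2] = if Rlt_dec (dist x t2) (dist x t1) then 1%nat else 0%nat.
Proof. unfold closest; simpl; destruct Rlt_dec; reflexivity. Qed.

Lemma skm_step_pair (t1 t2 : pt) (n1 n2 : nat) (x : pt) :
  skm_step [(t1, n1); (t2, n2)] x =
  if Rlt_dec (dist x t2) (dist x t1)
  then [(t1, n1); (padd t2 (pscale (/ INR (S n2)) (psub x t2)), S n2)]
  else [(padd t1 (pscale (/ INR (S n1)) (psub x t1)), S n1); (t2, n2)].
Proof. unfold skm_step, closest; simpl; destruct Rlt_dec; reflexivity. Qed.

Lemma seq_kmeans2_four (x1 x2 x3 x4 : pt) :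
  seq_kmeans 2 [x1; x2; x3; x4] =
  map fst (skm_step (skm_step [(x1, 1%nat); (x2, 1%nat)] x3) x4).
Proof. reflexivity. Qed.

Lemma family_eq_induced_closest (X T : list pt) (G : list (pt -> bool))
    (D1 : pt -> bool) (x y : pt) :
  family_eq X (induced X T) G -> In D1 G -> In x X -> In y X -> D1 x = true ->
  closest y T = closest x T <-> D1 y = true.
Proof.
  intros [_ induced_covers] G_D1 Xx Xy D1x.
  destruct (induced_covers D1 G_D1) as [A [inducedA A_D1]].
  apply filter_In in inducedA as [inducedA _].
  apply in_map_iff in inducedA as [i [<- _]].
  specialize (A_D1 x Xx) as cell_x; specialize (A_D1 y Xy) as cell_y.
  rewrite D1x in cell_x; simpl in cell_x, cell_y; apply Nat.eqb_eq in cell_x.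
  rewrite <- cell_y, cell_x, Nat.eqb_eq; reflexivity.
Qed.

Definition pa : pt := (2, 0, 0).
Definition pb : pt := (-2, 0, 0).
Definition pc : pt := (0, 2, 3).
Definition pd : pt := (0, -2, 3).
Definition X0 : list pt := [pa; pb; pc; pd].

Definition lower_pair (x : pt) : bool := if Rlt_dec (snd x) (3 / 2) then true else false.
Definition upper_pair (x : pt) : bool := negb (lower_pair x).

Ltac eval_pt_in H :=
  cbv beta iota zeta delta [sqdist psub padd pscale pzero fst snd INR pa pb pc pd] in H.

Ltac decide_Rlt_dec :=
  match goal with |- context [Rlt_dec ?u ?v] =>
    let H := fresh "H" in
    destruct (Rlt_dec u v) as [H | H];
    rewrite ?dist_lt_sqdist in H; eval_pt_in H; try (exfalso; lra)
  end.

Lemma X0_NoDup : NoDup X0.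
Proof.
  unfold X0, pa, pb, pc, pd.
  repeat constructor; simpl; intro H; repeat destruct H as [H | H];
    try (injection H; intros; lra); auto.
Qed.

Lemma lower_pair_X0 :
  lower_pair pa = true /\ lower_pair pb = true /\
  lower_pair pc = false /\ lower_pair pd = false.
Proof. unfold lower_pair, pa, pb, pc, pd; repeat split; decide_Rlt_dec; reflexivity. Qed.

Lemma is_2clustering_pairs : is_2clustering X0 lower_pair upper_pair.
Proof.
  destruct lower_pair_X0 as (la & lb & lc & ld).
  unfold is_2clustering, upper_pair, X0; simpl; rewrite la, lb, lc.
  repeat split; intros x _; rewrite Bool.negb_involutive; reflexivity.
Qed.

Lemma perfect2_pairs : perfect2 X0 lower_pair upper_pair.
Proof.
  destruct lower_pair_X0 as (la & lb & lc & ld).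
  intros x y w z Xx Xy Xw Xz same_xy same_wz.
  unfold X0 in *; simpl in Xx, Xy, Xw, Xz.
  unfold same_cluster, upper_pair in same_xy, same_wz.
  repeat destruct Xx as [Xx | Xx]; try contradiction; subst x;
  repeat destruct Xy as [Xy | Xy]; try contradiction; subst y;
  repeat destruct Xw as [Xw | Xw]; try contradiction; subst w;
  repeat destruct Xz as [Xz | Xz]; try contradiction; subst z;
  rewrite ?la, ?lb, ?lc, ?ld in same_xy; rewrite ?la, ?lb, ?lc, ?ld in same_wz;
  simpl in same_xy, same_wz;
  try discriminate;
  apply dist_lt_sqdist; unfold pa, pb, pc, pd;
  cbv beta iota zeta delta [sqdist psub fst snd]; lra.
Qed.

Ltac eval_cost2 :=
  unfold cost2, cluster_cost, mean, X0; cbn [filter];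
  repeat match goal with H : ?D ?p = _ |- _ => rewrite H end;
  cbn [map fold_right length psum]; rewrite ?dist_sqr;
  cbv beta iota zeta delta [sqdist psub padd pscale pzero fst snd INR pa pb pc pd].

Lemma cost2_pairs : cost2 X0 lower_pair upper_pair = 16.
Proof.
  destruct lower_pair_X0 as (la & lb & lc & ld).
  assert (ua : upper_pair pa = false) by (unfold upper_pair; rewrite la; reflexivity).
  assert (ub : upper_pair pb = false) by (unfold upper_pair; rewrite lb; reflexivity).
  assert (uc : upper_pair pc = true) by (unfold upper_pair; rewrite lc; reflexivity).
  assert (ud : upper_pair pd = true) by (unfold upper_pair; rewrite ld; reflexivity).
  eval_cost2; lra.
Qed.

Lemma cost2_pairs_min (D1 D2 : pt -> bool) :
  is_2clustering X0 D1 D2 -> cost2 X0 lower_pair upper_pair <= cost2 X0 D1 D2.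
Proof.
  intros (D1_ne & D2_ne & D1_D2); rewrite cost2_pairs.
  assert (ha := D1_D2 pa ltac:(simpl; tauto)); assert (hb := D1_D2 pb ltac:(simpl; tauto)).
  assert (hc := D1_D2 pc ltac:(simpl; tauto)); assert (hd := D1_D2 pd ltac:(simpl; tauto)).
  clear D1_D2; unfold X0 in D1_ne, D2_ne; cbn [existsb] in D1_ne, D2_ne.
  destruct (D2 pa) eqn:Ea, (D2 pb) eqn:Eb, (D2 pc) eqn:Ec, (D2 pd) eqn:Ed;
  simpl negb in ha, hb, hc, hd; rewrite ?ha, ?hb, ?hc, ?hd in D1_ne;
  simpl in D1_ne, D2_ne; try discriminate;
  eval_cost2; lra.
Qed.

Lemma closest_of_recovering_pairs (T : list pt) :
  family_eq X0 (induced X0 T) [lower_pair; upper_pair] ->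
  closest pb T = closest pa T /\ closest pc T <> closest pa T /\ closest pd T <> closest pa T.
Proof.
  intro recovers; destruct lower_pair_X0 as (la & lb & lc & ld).
  assert (lower_in : In lower_pair [lower_pair; upper_pair]) by (left; reflexivity).
  assert (X0a : In pa X0) by (simpl; tauto); assert (X0b : In pb X0) by (simpl; tauto).
  assert (X0c : In pc X0) by (simpl; tauto); assert (X0d : In pd X0) by (simpl; tauto).
  pose proof (family_eq_induced_closest _ _ _ _ pa pb recovers lower_in X0a X0b la) as [_ ab].
  pose proof (family_eq_induced_closest _ _ _ _ pa pc recovers lower_in X0a X0c la) as [ac _].
  pose proof (family_eq_induced_closest _ _ _ _ pa pd recovers lower_in X0a X0d la) as [ad _].
  rewrite lc in ac; rewrite ld in ad.
  repeat split; [exact (ab lb) | intro E; discriminate (ac E) | intro E; discriminate (ad E)].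
Qed.

Lemma seq_kmeans_misses_pairs (ord : list pt) :
  Permutation ord X0 ->
  ~ family_eq X0 (induced X0 (seq_kmeans 2 ord)) [lower_pair; upper_pair].
Proof.
  intro ord_X0.
  pose proof (Permutation_NoDup (Permutation_sym ord_X0) X0_NoDup) as ord_NoDup.
  assert (ord_in : forall x, In x ord -> In x X0) by (intros; eapply Permutation_in; eauto).
  destruct ord as [| x1 [| x2 [| x3 [| x4 [| x5 ord]]]]];
    apply Permutation_length in ord_X0; simpl in ord_X0; try discriminate.
  pose proof (ord_in x1 ltac:(simpl; tauto)) as X0x1.
  pose proof (ord_in x2 ltac:(simpl; tauto)) as X0x2.
  pose proof (ord_in x3 ltac:(simpl; tauto)) as X0x3.
  pose proof (ord_in x4 ltac:(simpl; tauto)) as X0x4.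
  clear ord_in; simpl in X0x1, X0x2, X0x3, X0x4.
  repeat destruct X0x1 as [X0x1 | X0x1]; try contradiction; subst x1;
  repeat destruct X0x2 as [X0x2 | X0x2]; try contradiction; subst x2;
  repeat destruct X0x3 as [X0x3 | X0x3]; try contradiction; subst x3;
  repeat destruct X0x4 as [X0x4 | X0x4]; try contradiction; subst x4;
  try solve [inversion ord_NoDup as [| ? ? not_in NoDup']; subst;
             inversion NoDup' as [| ? ? not_in' NoDup'']; subst;
             inversion NoDup'' as [| ? ? not_in'' _]; subst;
             simpl in not_in, not_in', not_in''; tauto].
  all: intro recovers; apply closest_of_recovering_pairs in recovers; revert recovers;
       rewrite seq_kmeans2_four, skm_step_pair; decide_Rlt_dec;
       rewrite skm_step_pair; decide_Rlt_dec;
       cbn [map fst]; rewrite !closest_pair; repeat decide_Rlt_dec; lia.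
Qed.

Theorem mainTheorem6 :
  exists X : list pt, length X = 4%nat /\ NoDup X /\
  exists C1 C2 : pt -> bool,
    is_2clustering X C1 C2 /\
    perfect2 X C1 C2 /\
    (forall D1 D2 : pt -> bool, is_2clustering X D1 D2 ->
        cost2 X C1 C2 <= cost2 X D1 D2) /\
    (forall ord : list pt, Permutation ord X ->
        ~ family_eq X (induced X (seq_kmeans 2 ord)) [C1; C2]).
Proof.
  exists X0; split; [reflexivity | split; [exact X0_NoDup |]].
  exists lower_pair, upper_pair.
  split; [exact is_2clustering_pairs |].
  split; [exact perfect2_pairs |].
  split; [exact cost2_pairs_min | exact seq_kmeans_misses_pairs].
Qed.
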